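(* Let $G$ be a connected non-regular graph with $n$ vertices, $m$ edges, maximum degree $\Delta$ and minimum degree $\delta$, and put $D=(\Delta-\delta)^2$. Then (i) if $n\le\frac{4m(\sqrt{1+D}-1)}{D}$, $$QE(G)\ <\ \frac{2m}{n}+\sqrt{(n-1)\Big[2m+\frac n4D-\Big(\frac{2m}{n}\Big)^2\Big]};$$ (ii) if $n>\frac{4m(\sqrt{1+D}-1)}{D}$, $$QE(G)\ <\ \sqrt{\frac{2m}{n}+\frac14D}+\sqrt{(n-1)\Big(2m+\frac{n-1}{4}D-\frac{2m}{n}\Big)}.$$
   Context: All graphs are finite, simple and undirected. For a graph $G$ with $n$ vertices and $m$ edges, let $q_1\ge\cdots\ge q_n\ge0$ be the eigenvalues of the signless Laplacian $Q(G)=D(G)+A(G)$ (degree diagonal matrix plus adjacency matrix). The signless Laplacian energy is $QE(G)=\sum_{i=1}^n|q_i-\frac{2m}{n}|$. *)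

From HB Require Import structures.
From mathcomp Require Import all_boot all_order all_algebra.
Set Implicit Arguments. Unset Strict Implicit. Unset Printing Implicit Defensive.
Import Order.TTheory GRing.Theory Num.Theory.
Local Open Scope ring_scope.

Definition simple_graph (n : nat) (e : rel 'I_n) : Prop :=
  symmetric e /\ irreflexive e.

Definition deg (n : nat) (e : rel 'I_n) (x : 'I_n) : nat := #|[set y | e x y]|.

Definition edges (n : nat) (e : rel 'I_n) : {set {set 'I_n}} :=
  [set E : {set 'I_n} | [exists x, exists y, e x y && (E == [set x; y])]].

Definition nedges (n : nat) (e : rel 'I_n) : nat := #|edges e|.

Definition maxdeg (n : nat) (e : rel 'I_n) : nat := (\max_(x : 'I_n) deg e x)%N.
Definition mindeg (n : nat) (e : rel 'I_n) : nat :=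
  \big[minn/n]_(x : 'I_n) deg e x.

Definition connected_graph (n : nat) (e : rel 'I_n) : Prop :=
  (0 < n)%N /\ forall x y : 'I_n, connect e x y.

Definition regular_graph (n : nat) (e : rel 'I_n) : Prop :=
  forall x y : 'I_n, deg e x = deg e y.

Definition signlessQ (R : nzRingType) (n : nat) (e : rel 'I_n) : 'M[R]_n :=
  \matrix_(i, j) ((deg e i)%:R * (i == j)%:R + (e i j)%:R).

(* s is the multiset of eigenvalues of Q (with multiplicity) *)
Definition is_spectrum (R : comNzRingType) (n : nat) (M : 'M[R]_n) (s : seq R) : Prop :=
  char_poly M = \prod_(x <- s) ('X - x%:P).

Definition QE (R : realFieldType) (n : nat) (e : rel 'I_n) (s : seq R) : R :=
  \sum_(q <- s) `|q - (2 * (nedges e)%:R) / n%:R|.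

From HB Require Import structures.
From mathcomp Require Import all_boot all_order all_algebra.
From mathcomp Require Import reals.
From mathcomp Require Import sesquilinear spectral complex.
From mathcomp Require Import ring lra zify.
Set Implicit Arguments. Unset Strict Implicit. Unset Printing Implicit Defensive.
Import Order.TTheory GRing.Theory Num.Theory.
Local Open Scope ring_scope.

(* Let q_1 >= ... >= q_n be the spectrum of Q = D + A, d = 2m / n the average
   degree, D = (Delta - delta)^2 and M = 2m + n D / 4.
   - Second moment: sum_i (q_i - d)^2 = tr (Q - d I)^2 = sum_v ((d_v - d)^2 + d_v),
     and since the degrees lie in [delta, Delta] with mean d this is at most M.
   - Largest eigenvalue: the Rayleigh quotient of the all-ones vector gives
     q_1 >= 4m / n = 2d, strictly because equality makes G regular.
   - Case (i): QE = (q_1 - d) + sum_{i >= 2} |q_i - d| is bounded, by Cauchy-Schwarz,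
     by f(q_1 - d) where f(x) = x + sqrt((n - 1)(M - x^2)); hypothesis (i) says
     M <= n d^2, so f decreases beyond d and f(q_1 - d) < f(d).
   - Case (ii): Cauchy-Schwarz gives QE^2 <= n M = n^2 (d + D / 4), strictly:
     otherwise all |q_i - d| are equal, (Q - d I)^2 is scalar, and the degrees
     of any two vertices would be distinct roots of t^2 + t = D / 4 differing by
     at most sqrt D, which is impossible. *)

Section RealInequalities.
Variable R : rcfType.

Lemma sumr_const_seq (T : Type) (t : seq T) (c : R) : \sum_(y <- t) c = c *+ size t.
Proof. by rewrite big_const_seq count_predT iter_addr_0. Qed.

Lemma seq_max (t : seq R) : t != [::] ->
  exists2 q, q \in t & forall x, x \in t -> x <= q.
Proof.
elim: t => // a t IH _; have [->|/IH[q qt qmax]] := eqVneq t [::].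
  by exists a; rewrite ?mem_head // => x; rewrite inE => /eqP ->.
exists (Num.max a q); first by rewrite /Num.max; case: ifP; rewrite inE ?qt ?eqxx ?orbT.
by move=> x; rewrite inE le_max => /orP[/eqP ->|/qmax ->]; rewrite ?lexx ?orbT.
Qed.

Lemma cauchy_schwarz_seq (t : seq R) :
  (\sum_(y <- t) y) ^+ 2 <= (size t)%:R * \sum_(y <- t) y ^+ 2 /\
  ((\sum_(y <- t) y) ^+ 2 = (size t)%:R * \sum_(y <- t) y ^+ 2 ->
    forall y, y \in t -> (size t)%:R * y = \sum_(y <- t) y).
Proof.
set k : R := (size t)%:R; set T := \sum_(y <- t) y.
have dev_sum : \sum_(y <- t) (k * y - T) ^+ 2 = k * (k * \sum_(y <- t) y ^+ 2 - T ^+ 2).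
  rewrite (eq_bigr (fun y => (k ^+ 2 * y ^+ 2 - 2 * k * T * y) + T ^+ 2)); last first.
    by move=> y _; rewrite sqrrB; ring.
  by rewrite big_split /= sumrB -!mulr_sumr sumr_const_seq -/T -/k -mulr_natr; ring.
have dev_ge0 : 0 <= \sum_(y <- t) (k * y - T) ^+ 2 by apply: sumr_ge0 => y _; exact: sqr_ge0.
have [k0|k_neq0] := eqVneq k 0.
  have t0 : t = [::] by move/eqP: k0; rewrite /k pnatr_eq0 => /eqP /size0nil.
  by rewrite /T /k t0 big_nil /= mul0r expr0n /=; split => // _ y.
have k_gt0 : 0 < k by rewrite lt_def k_neq0 ler0n.
split; first by rewrite -subr_ge0 -(pmulr_rge0 _ k_gt0) -dev_sum.
move=> eqT y yt.
have : \sum_(y <- t) (k * y - T) ^+ 2 == 0 by rewrite dev_sum eqT subrr mulr0.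
rewrite psumr_eq0; last by move=> z _; exact: sqr_ge0.
by move=> /allP /(_ y yt) /=; rewrite sqrf_eq0 subr_eq0 => /eqP.
Qed.

Lemma sum_abs_le_sqrt (t : seq R) :
  \sum_(y <- t) `|y| <= Num.sqrt ((size t)%:R * \sum_(y <- t) y ^+ 2).
Proof.
have [CS _] := cauchy_schwarz_seq [seq `|y| | y <- t].
rewrite size_map !big_map in CS.
rewrite [X in _ <= _ * X](eq_bigr (fun y => y ^+ 2)) in CS; last first.
  by move=> y _; rewrite real_normK ?num_real.
rewrite -[leLHS]ger0_norm ?sumr_ge0 // -sqrtr_sqr ler_sqrt //.
by apply: mulr_ge0; rewrite ?ler0n ?sumr_ge0 // => y _; exact: sqr_ge0.
Qed.

Lemma sum_sq_dev_le (I : finType) (F : I -> R) (lo hi d : R) :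
  (forall i, lo <= F i <= hi) -> \sum_i F i = #|I|%:R * d ->
  \sum_i (F i - d) ^+ 2 <= #|I|%:R * (hi - lo) ^+ 2 / 4.
Proof.
move=> Fbound Fsum; set N : R := #|I|%:R.
have pointwise i : (F i - d) ^+ 2 <= (hi + lo - 2 * d) * F i + (d ^+ 2 - hi * lo).
  by have /andP[h1 h2] := Fbound i; nra.
apply: le_trans (ler_sum _ (fun i _ => pointwise i)) _.
rewrite big_split /= -mulr_sumr Fsum sumr_const -mulr_natr -/N.
have N0 : 0 <= N by rewrite ler0n.
have := mulr_ge0 N0 (sqr_ge0 (hi + lo - 2 * d)); nra.
Qed.

(* The map x |-> x + sqrt((N - 1)(M - x^2)) is strictly decreasing to the
   right of sqrt(M / N), here compared at two points d < x beyond it. *)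
Lemma sqrt_tail_decreasing (N M d x : R) : 2 <= N -> 0 <= d -> d < x ->
  M <= N * d ^+ 2 -> x ^+ 2 <= M ->
  x + Num.sqrt ((N - 1) * (M - x ^+ 2)) < d + Num.sqrt ((N - 1) * (M - d ^+ 2)).
Proof.
move=> N2 d0 dx MN xM.
set Sx := Num.sqrt ((N - 1) * (M - x ^+ 2)).
set Sd := Num.sqrt ((N - 1) * (M - d ^+ 2)).
have dx2 : d ^+ 2 < x ^+ 2 by nra.
have Sx2 : Sx ^+ 2 = (N - 1) * (M - x ^+ 2) by rewrite sqr_sqrtr //; apply: mulr_ge0; lra.
have Sd2 : Sd ^+ 2 = (N - 1) * (M - d ^+ 2) by rewrite sqr_sqrtr //; apply: mulr_ge0; lra.
have Sx0 : 0 <= Sx by exact: sqrtr_ge0.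
have Sd0 : 0 <= Sd by exact: sqrtr_ge0.
have Sx_lt : Sx < (N - 1) * x.
  rewrite -(ltr_pXn2r (_ : (0 < 2)%N)) ?nnegrE //; last by apply: mulr_ge0; lra.
  rewrite Sx2 exprMn.
  have : 0 < (N - 1) * (N * x ^+ 2 - M) by apply: mulr_gt0; nra.
  nra.
have Sd_le : Sd <= (N - 1) * d.
  rewrite -(ler_pXn2r (_ : (0 < 2)%N)) ?nnegrE //; last by apply: mulr_ge0; lra.
  rewrite Sd2 exprMn.
  have : 0 <= (N - 1) * (N * d ^+ 2 - M) by apply: mulr_ge0; lra.
  nra.
nra.
Qed.

Lemma case_i_threshold (N m D : R) : 0 < N -> 0 < D ->
  N <= 4 * m * (Num.sqrt (1 + D) - 1) / D -> 2 * m + N / 4 * D <= N * (2 * m / N) ^+ 2.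
Proof.
move=> N0 D0 H.
set r := Num.sqrt (1 + D).
have r2 : r ^+ 2 = 1 + D by rewrite sqr_sqrtr //; lra.
have r0 : 0 <= r by exact: sqrtr_ge0.
have r1 : 1 < r by nra.
have H1 : N * D <= 4 * m * (r - 1) by rewrite -ler_pdivlMr.
have H2 : N * (r + 1) <= 4 * m.
  have : (r - 1) * (N * (r + 1)) <= (r - 1) * (4 * m) by nra.
  by rewrite ler_pM2l //; lra.
have -> : N * (2 * m / N) ^+ 2 = 4 * m ^+ 2 / N by field; apply/eqP; lra.
by rewrite ler_pdivlMr //; nra.
Qed.

(* A quantity whose square is below N^2 (d + D/4) is below the bound of case (ii),
   which is N sqrt(d + D/4) split as sqrt(a) + (N - 1) sqrt(a). *)
Lemma case_ii_bound (N m D E : R) : 1 <= N -> 0 <= D -> 0 <= E -> 0 <= m ->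
  E ^+ 2 < N * (2 * m + N / 4 * D) ->
  E < Num.sqrt (2 * m / N + D / 4)
      + Num.sqrt ((N - 1) * (2 * m + (N - 1) / 4 * D - 2 * m / N)).
Proof.
move=> N1 D0 E0 m0 HE.
have N0 : N != 0 by apply/eqP; lra.
set a := 2 * m / N + D / 4.
have a0 : 0 <= a by rewrite /a; apply: addr_ge0; [apply: divr_ge0|]; lra.
have -> : (N - 1) * (2 * m + (N - 1) / 4 * D - 2 * m / N) = (N - 1) ^+ 2 * a.
  by rewrite /a; field.
rewrite sqrtrM ?sqr_ge0 // sqrtr_sqr ger0_norm; last lra.
have sa0 := sqrtr_ge0 a.
have sa2 : Num.sqrt a ^+ 2 = a by rewrite sqr_sqrtr.
have : E < N * Num.sqrt a.
  rewrite -(ltr_pXn2r (_ : (0 < 2)%N)) ?nnegrE //; last by apply: mulr_ge0; lra.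
  by rewrite exprMn sa2 (_ : N ^+ 2 * a = N * (2 * m + N / 4 * D)) //; rewrite /a; field.
lra.
Qed.

(* The function t |-> t^2 + t takes the value D/4 at two points at most
   sqrt D apart only if they coincide: distinct solutions differ by sqrt(D + 1). *)
Lemma no_two_levels (a b D : R) : a != b -> (a - b) ^+ 2 <= D ->
  a ^+ 2 + a = D / 4 -> b ^+ 2 + b = D / 4 -> False.
Proof.
move=> ab abD ha hb.
have : (a - b) * (a + b + 1) = 0 by nra.
move/eqP; rewrite mulf_eq0 subr_eq0 (negbTE ab) /= => /eqP sum_ab.
by move: abD; rewrite (_ : b = - 1 - a); [nra | lra].
Qed.

End RealInequalities.

Lemma char_poly_conj (F : comNzRingType) n (P P' D : 'M[F]_n) :
  P' *m P = 1%:M -> char_poly (P' *m D *m P) = char_poly D.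
Proof.
move=> P'P; rewrite /char_poly /char_poly_mx.
have -> : 'X%:M - map_mx polyC (P' *m D *m P) =
   map_mx polyC P' *m ('X%:M - map_mx polyC D) *m map_mx polyC P.
  rewrite mulmxBr mulmxBl !map_mxM; congr (_ - _).
  by rewrite mul_mx_scalar -scalemxAl -map_mxM P'P map_mx1 scalemx1.
rewrite !det_mulmx mulrC mulrA -det_mulmx.
by rewrite det_mulmx [X in X * _]mulrC -det_mulmx -map_mxM P'P map_mx1 det1 mul1r.
Qed.

Section SymmetricSpectrum.
Variables (R : rcfType) (n : nat) (A : 'M[R]_n) (s : seq R).
Hypotheses (Asym : A^T = A) (Aspec : is_spectrum A s).
Local Open Scope sesquilinear_scope.
Local Notation toC := (real_complex R).
Local Notation Ac := (map_mx toC A).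
Local Notation U := (spectralmx Ac).
Local Notation dg := (spectral_diag Ac).

Lemma spectrum_size : size s = n.
Proof. by have := size_char_poly A; rewrite Aspec size_prod_XsubC => -[]. Qed.

Lemma conj_real_complex (x : R) : (toC x)^* = toC x.
Proof. by apply/CrealP/complex_realP; exists x. Qed.

Lemma conjtr_real_complex m p (M : 'M[R]_(m, p)) : (map_mx toC M)^t* = map_mx toC M^T.
Proof. by apply/matrixP => i j; rewrite !mxE conj_real_complex. Qed.

Lemma spectral_unitary : U *m U^t* = 1%:M.
Proof. exact/unitarymxP/spectral_unitarymx. Qed.

Lemma spectral_unitary_tr : U^t* *m U = 1%:M.
Proof. by rewrite -invmx_unitary ?spectral_unitarymx // mulVmx ?spectral_unit. Qed.

Lemma spectral_decomposition : Ac = U^t* *m diag_mx dg *m U.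
Proof.
rewrite -invmx_unitary ?spectral_unitarymx //; apply/orthomx_spectralP.
by apply/normalmxP; rewrite conjtr_real_complex Asym.
Qed.

Lemma spectrum_diag : perm_eq (map toC s) [seq dg 0 i | i <- enum 'I_n].
Proof.
apply: prod_XsubC_eq.
have := congr1 (map_poly toC) Aspec.
rewrite map_char_poly {1}spectral_decomposition char_poly_conj ?spectral_unitary_tr //.
rewrite char_poly_trig ?diag_mx_is_trig // rmorph_prod /= => charE.
rewrite !big_map -enumT big_enum /=.
transitivity (\prod_(x <- s) map_poly toC ('X - x%:P)).
  by apply: eq_bigr => x _; rewrite map_polyXsubC.
by rewrite -charE; apply: eq_bigr => i _; rewrite mxE eqxx mulr1n.
Qed.

Lemma diag_in_spectrum i : exists2 x, x \in s & dg 0 i = toC x.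
Proof.
have : dg 0 i \in map toC s.
  by rewrite (perm_mem spectrum_diag); apply/mapP; exists i; rewrite ?mem_enum.
by case/mapP => x xs ->; exists x.
Qed.

Lemma sum_spectrum_diag (G : R[i] -> R[i]) : \sum_(x <- s) G (toC x) = \sum_i G (dg 0 i).
Proof. by rewrite -(big_map toC xpredT) (perm_big _ spectrum_diag) big_map big_enum. Qed.

Lemma shifted_sq_decomposition c :
  map_mx toC ((A - c%:M) *m (A - c%:M)) =
  U^t* *m diag_mx (\row_i ((dg 0 i - toC c) ^+ 2)) *m U.
Proof.
have shiftE : Ac - (toC c)%:M = U^t* *m diag_mx (\row_i (dg 0 i - toC c)) *m U.
  have -> : diag_mx (\row_i (dg 0 i - toC c)) = diag_mx dg - (toC c)%:M.
    by apply/matrixP => i j; rewrite !mxE mulrnBl.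
  rewrite mulmxBr mulmxBl -spectral_decomposition mul_mx_scalar -scalemxAl.
  by rewrite spectral_unitary_tr scalemx1.
rewrite map_mxM map_mxB map_scalar_mx shiftE -!mulmxA (mulmxA U) spectral_unitary mul1mx.
rewrite (mulmxA (diag_mx _)) mulmx_diag !mulmxA.
by congr (_ *m diag_mx _ *m _); apply/rowP => i; rewrite !mxE expr2.
Qed.

Lemma sum_sq_dev_trace c : \sum_(x <- s) (x - c) ^+ 2 = \tr ((A - c%:M) *m (A - c%:M)).
Proof.
apply: (@complexI R); rewrite rmorph_sum /= -trace_map_mx shifted_sq_decomposition.
rewrite mxtrace_mulC mulmxA spectral_unitary mul1mx mxtrace_diag.
under eq_bigr do rewrite rmorphXn rmorphB.
by rewrite (sum_spectrum_diag (fun y => (y - toC c) ^+ 2)); apply: eq_bigr => i _; rewrite mxE.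
Qed.

Lemma sq_dev_const c r : (forall x, x \in s -> (x - c) ^+ 2 = r) ->
  (A - c%:M) *m (A - c%:M) = r%:M.
Proof.
move=> sq_r; apply: (map_mx_inj (f := toC)).
rewrite shifted_sq_decomposition map_scalar_mx.
have -> : diag_mx (\row_k ((dg 0 k - toC c) ^+ 2)) = (toC r)%:M.
  apply/matrixP => k l; rewrite !mxE.
  by have [x xs ->] := diag_in_spectrum k; rewrite -rmorphB -rmorphXn sq_r.
by rewrite mul_mx_scalar -scalemxAl spectral_unitary_tr scalemx1.
Qed.

Lemma quad_form_conj (u : 'cV[R]_n) (M : 'M[R[i]]_n) :
  (map_mx toC u)^T *m (U^t* *m M *m U) *m map_mx toC u =
  (U *m map_mx toC u)^t* *m M *m (U *m map_mx toC u).
Proof. by rewrite trmx_mul map_mxM conjtr_real_complex map_trmx !mulmxA. Qed.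

Lemma quad_form_diag (w : 'cV[R[i]]_n) (x : 'rV[R[i]]_n) :
  (w^t* *m diag_mx x *m w) 0 0 = \sum_i x 0 i * (w i 0 * (w i 0)^*).
Proof.
rewrite mul_mx_diag mxE; apply: eq_bigr => i _.
by rewrite !mxE; ring.
Qed.

Lemma rayleigh (q : R) (u : 'cV[R]_n) : (forall x, x \in s -> x <= q) ->
  (u^T *m A *m u) 0 0 <= q * (u^T *m u) 0 0 /\
  ((u^T *m A *m u) 0 0 = q * (u^T *m u) 0 0 -> A *m u = q *: u).
Proof.
move=> q_max; set w := U *m map_mx toC u.
have mapE (M : 'M[R]_1) : toC (M 0 0) = map_mx toC M 0 0 by rewrite mxE.
have formA : toC ((u^T *m A *m u) 0 0) = \sum_i dg 0 i * (w i 0 * (w i 0)^*).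
  rewrite mapE !map_mxM -map_trmx {1}spectral_decomposition.
  by rewrite quad_form_conj quad_form_diag.
have formI : toC ((u^T *m u) 0 0) = \sum_i (w i 0 * (w i 0)^*).
  rewrite -{1}[u^T]mulmx1 mapE !map_mxM -map_trmx map_mx1 -spectral_unitary_tr.
  rewrite -[U^t*]mulmx1 quad_form_conj mulmx1 mxE.
  by apply: eq_bigr => i _; rewrite !mxE mulrC.
have gapE : toC (q * (u^T *m u) 0 0 - (u^T *m A *m u) 0 0) =
    \sum_i (toC q - dg 0 i) * (w i 0 * (w i 0)^*).
  rewrite rmorphB rmorphM /= formA formI mulr_sumr -sumrB.
  by apply: eq_bigr => i _; rewrite mulrBl.
have gap_ge0 i : 0 <= (toC q - dg 0 i) * (w i 0 * (w i 0)^*).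
  apply: mulr_ge0; last exact: mul_conjC_ge0.
  have [x xs ->] := diag_in_spectrum i; rewrite -rmorphB -(rmorph0 toC) lecR subr_ge0.
  exact: q_max.
split; first by rewrite -subr_ge0 -lecR rmorph0 gapE; exact: sumr_ge0.
move=> formEq.
have gap0 i : (toC q - dg 0 i) * w i 0 = 0.
  have sum0 : \sum_i (toC q - dg 0 i) * (w i 0 * (w i 0)^*) = 0.
    by rewrite -gapE formEq subrr rmorph0.
  move: (@psumr_eq0P _ _ _ _ (fun i _ => gap_ge0 i) sum0 i isT) => /eqP.
  by rewrite mulf_eq0 mul_conjC_eq0 => /orP[] /eqP ->; rewrite ?mul0r ?mulr0.
have Dw : diag_mx dg *m w = toC q *: w.
  apply/matrixP => i j; rewrite ord1 mul_diag_mx !mxE.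
  have := gap0 i; rewrite /w mxE => h.
  by apply/eqP; rewrite -subr_eq0 -mulrBl -opprB mulNr oppr_eq0 h.
apply: (map_mx_inj (f := toC)); rewrite map_mxZ map_mxM spectral_decomposition.
by rewrite -!mulmxA Dw -scalemxAr mulmxA spectral_unitary_tr mul1mx.
Qed.

End SymmetricSpectrum.

Lemma set2_inv (T : finType) (x y a b : T) : x != y -> [set x; y] = [set a; b] ->
  (x == a) && (y == b) || (x == b) && (y == a).
Proof.
move=> xy xyE.
have xab : x \in [set a; b] by rewrite -xyE !inE eqxx.
have yab : y \in [set a; b] by rewrite -xyE !inE eqxx orbT.
move: xab yab xy; rewrite !inE {xyE}.
by case/orP=> /eqP ->; case/orP=> /eqP ->; rewrite ?eqxx ?orbT.
Qed.

Section SimpleGraph.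
Variables (n : nat) (e : rel 'I_n).
Hypotheses (esym : symmetric e) (eirr : irreflexive e).

(* Handshake lemma: the degrees sum to twice the number of edges. Both sides
   count the arcs (x, y) with x ~ y; each edge {x, y} carries two arcs. *)
Lemma handshake : (\sum_i deg e i = 2 * nedges e)%N.
Proof.
pose arcs := [set p : 'I_n * 'I_n | e p.1 p.2].
have -> : (\sum_i deg e i = #|arcs|)%N.
  rewrite -sum1_card (eq_bigl (fun p : 'I_n * 'I_n => xpredT p.1 && e p.1 p.2));
    last by move=> p; rewrite inE.
  rewrite -(pair_big_dep xpredT (fun i j => e i j) (fun _ _ => 1%N)) /=.
  by apply: eq_bigr => i _; rewrite /deg -sum1_card; apply: eq_bigl => j; rewrite inE.
rewrite -sum1_card /nedges.
rewrite (partition_big (fun p : 'I_n * 'I_n => [set p.1; p.2]) (mem (edges e))) /=;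
  last first.
  move=> [x y]; rewrite !inE /= => exy.
  by apply/existsP; exists x; apply/existsP; exists y; rewrite exy eqxx.
rewrite mulnC -sum_nat_const; apply: eq_bigr => E.
rewrite inE => /existsP[a /existsP[b /andP[eab /eqP ->]]].
have ab : a != b by apply: contraTneq eab => ->; rewrite eirr.
rewrite (bigD1 (a, b)) /=; last by rewrite !inE eab eqxx.
rewrite (bigD1 (b, a)) /=; last first.
  rewrite !inE esym eab /= xpair_eqE eq_sym (negbTE ab) andbF andbT.
  by apply/eqP/setP => z; rewrite !inE orbC.
rewrite big1 // => [[x y]] /andP[/andP[/andP[]]]; rewrite inE /= => exy /eqP xyE.
rewrite !xpair_eqE => h1 h2.
have xy : x != y by apply: contraTneq exy => ->; rewrite eirr.
by case/orP: (set2_inv xy xyE) => H; [move: h1 | move: h2]; rewrite H.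
Qed.

Lemma mindeg_le i : (mindeg e <= deg e i)%N.
Proof.
rewrite /mindeg; elim: (index_enum _) (mem_index_enum i) => // j r IH.
rewrite inE big_cons => /orP[/eqP <-|ir]; first exact: geq_minl.
exact: leq_trans (geq_minr _ _) (IH ir).
Qed.

Lemma maxdeg_ge i : (deg e i <= maxdeg e)%N.
Proof. exact: leq_bigmax. Qed.

Lemma nonregular_pair : ~ regular_graph e -> exists x y, deg e x != deg e y.
Proof.
move=> nreg; have [/forallP allEq | /forallPn[x /forallPn[y xy]]] :=
  boolP [forall x, forall y, deg e x == deg e y]; last by exists x, y.
by case: nreg => x y; apply/eqP/(forallP (allEq x)).
Qed.

Section SignlessLaplacian.
Variable R : comNzRingType.
Local Notation Q := (signlessQ R e).

Lemma signlessQ_sym : Q^T = Q.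
Proof.
apply/matrixP => i j; rewrite !mxE esym.
by case: (eqVneq i j) => [->|ij]; rewrite ?eqxx // !mulr0.
Qed.

Lemma degE i : (deg e i)%:R = \sum_j (e i j)%:R :> R.
Proof.
rewrite /deg -sum1_card big_mkcond /= natr_sum.
by apply: eq_bigr => j _; rewrite inE; case: (e i j).
Qed.

Lemma signlessQ_ones : Q *m const_mx 1 = \col_i (2 * (deg e i)%:R).
Proof.
apply/colP => i; rewrite !mxE.
under eq_bigr do rewrite !mxE mulr1.
rewrite big_split /= -degE (bigD1 i) //= eqxx mulr1 big1 ?addr0.
  by rewrite mulrDl mul1r.
by move=> j ij; rewrite eq_sym (negbTE ij) mulr0.
Qed.

Lemma signlessQ_shift_sq_diag c i :
  ((Q - c%:M) *m (Q - c%:M)) i i = ((deg e i)%:R - c) ^+ 2 + (deg e i)%:R.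
Proof.
rewrite mxE (bigD1 i) //= !mxE eqxx eirr mulr1 addr0 mulr1n expr2; congr (_ + _).
rewrite [in RHS]degE [in RHS](bigD1 i) //= eirr add0r; apply: eq_bigr => j ij.
rewrite !mxE eq_sym (negbTE ij) !mulr0 !add0r mulr0n !subr0 (esym j i).
by case: (e i j); rewrite ?mulr1 ?mulr0.
Qed.

End SignlessLaplacian.

End SimpleGraph.

Section SignlessEnergy.
Variables (R : rcfType) (n : nat) (e : rel 'I_n) (s : seq R).
Hypotheses (esym : symmetric e) (eirr : irreflexive e).
Hypothesis Qspec : is_spectrum (signlessQ R e) s.
Variables x0 y0 : 'I_n.
Hypothesis deg_x0y0 : deg e x0 != deg e y0.

Local Notation N := (n%:R : R).
Local Notation m := ((nedges e)%:R : R).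
Local Notation d := (2 * m / N).
Local Notation D := (((maxdeg e)%:R - (mindeg e)%:R) ^+ 2 : R).
Local Notation M := (2 * m + N / 4 * D).
Local Notation Qsym := (signlessQ_sym esym R).

Lemma n_gt1 : (1 < n)%N.
Proof.
have x0y0 : x0 != y0 by apply: contraNneq deg_x0y0 => ->.
apply: contraNT x0y0; rewrite -ltnNge => n1; apply/eqP/val_inj => /=.
by have := ltn_ord x0; have := ltn_ord y0; lia.
Qed.

Lemma N_ge2 : 2 <= N.
Proof. by rewrite (ler_nat R 2 n) n_gt1. Qed.

Lemma N_neq0 : N != 0.
Proof. by apply/eqP; have := N_ge2; lra. Qed.

Lemma sum_degrees : \sum_i (deg e i)%:R = 2 * m.
Proof. by rewrite -natr_sum (handshake esym eirr) natrM. Qed.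

Lemma deg_bounds v : (mindeg e)%:R <= ((deg e v)%:R : R) <= (maxdeg e)%:R.
Proof. by rewrite !ler_nat mindeg_le maxdeg_ge. Qed.

Lemma degree_gap_le x y : ((deg e x)%:R - (deg e y)%:R) ^+ 2 <= D.
Proof.
have /andP[x1 x2] := deg_bounds x; have /andP[y1 y2] := deg_bounds y.
have h1 : 0 <= (maxdeg e)%:R - (mindeg e)%:R - ((deg e x)%:R - (deg e y)%:R) :> R by lra.
have h2 : 0 <= (maxdeg e)%:R - (mindeg e)%:R + ((deg e x)%:R - (deg e y)%:R) :> R by lra.
by have := mulr_ge0 h1 h2; nra.
Qed.

Lemma D_gt0 : 0 < D.
Proof.
apply: lt_le_trans (degree_gap_le x0 y0).
by rewrite lt_def sqr_ge0 andbT sqrf_eq0 subr_eq0 eqr_nat.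
Qed.

(* Second moment: sum (q - d)^2 = tr (Q - d)^2 = sum_v ((deg v - d)^2 + deg v) <= M. *)
Lemma spectral_second_moment : \sum_(q <- s) (q - d) ^+ 2 <= M.
Proof.
rewrite (sum_sq_dev_trace Qsym Qspec) /mxtrace.
under eq_bigr do rewrite signlessQ_shift_sq_diag //.
rewrite big_split /= sum_degrees.
have mean : \sum_v (deg e v)%:R = #|'I_n|%:R * d.
  by rewrite card_ord sum_degrees [RHS]mulrC divfK ?N_neq0.
by have := sum_sq_dev_le deg_bounds mean; rewrite card_ord; lra.
Qed.

(* Rayleigh quotient of the all-ones vector: the largest eigenvalue exceeds
   4m / N = 2d, strictly because equality would make every degree q / 2. *)
Lemma spectral_radius_gt (q : R) : (forall x, x \in s -> x <= q) -> 2 * d < q.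
Proof.
move=> q_max; set u : 'cV[R]_n := const_mx 1.
have [quad_le quad_eq] := rayleigh Qsym Qspec u q_max.
have quadQ : (u^T *m signlessQ R e *m u) 0 0 = 2 * (2 * m).
  rewrite -mulmxA signlessQ_ones mxE -sum_degrees mulr_sumr.
  by apply: eq_bigr => i _; rewrite !mxE mul1r.
have quad1 : (u^T *m u) 0 0 = N.
  by rewrite mxE (eq_bigr (fun _ => 1)) ?sumr_const ?card_ord // => i _; rewrite !mxE mulr1.
rewrite quadQ quad1 in quad_le quad_eq.
have N_gt0 : 0 < N by have := N_ge2; lra.
suff lt : 2 * (2 * m) < q * N by rewrite -(ltr_pM2r N_gt0) mulrA divfK ?N_neq0.
rewrite lt_neqAle quad_le andbT; apply/eqP => /quad_eq eigen.
have deg_half v : 2 * (deg e v)%:R = q.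
  have := congr1 (fun w : 'cV[R]_n => w v 0) eigen.
  by rewrite /= signlessQ_ones !mxE mulr1.
move: deg_x0y0; rewrite -(eqr_nat R) => /eqP; apply.
by have := deg_half x0; have := deg_half y0; lra.
Qed.

(* Splitting off the largest eigenvalue q: QE = (q - d) + sum_{rest} |x - d|,
   and Cauchy-Schwarz on the n - 1 remaining terms. *)
Lemma energy_split_largest (q : R) : q \in s -> d <= q ->
  QE e s <= (q - d) + Num.sqrt ((N - 1) * (M - (q - d) ^+ 2)).
Proof.
move=> qs dq; have perm_q := perm_to_rem qs.
have QE_split : QE e s = (q - d) + \sum_(x <- rem q s) `|x - d|.
  by rewrite /QE (perm_big _ perm_q) big_cons ger0_norm // subr_ge0.
have moment_split := spectral_second_moment.
rewrite (perm_big _ perm_q) big_cons /= in moment_split.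
have := sum_abs_le_sqrt [seq x - d | x <- rem q s].
rewrite size_map size_rem // (spectrum_size Qspec) !big_map => tail.
have N1 : 0 <= N - 1 by have := N_ge2; lra.
have n1 : (n.-1)%:R = N - 1 by rewrite -subn1 natrB // ltnW // n_gt1.
have rest_ge0 : 0 <= \sum_(x <- rem q s) (x - d) ^+ 2.
  by apply: sumr_ge0 => x _; exact: sqr_ge0.
rewrite n1 in tail; rewrite QE_split lerD2l (le_trans tail) // ler_sqrt.
  by rewrite ler_wpM2l //; lra.
by apply: mulr_ge0 => //; lra.
Qed.


Lemma eigen_dev_le_moment (q : R) : q \in s -> (q - d) ^+ 2 <= M.
Proof.
move=> qs; apply: le_trans spectral_second_moment.
rewrite (perm_big _ (perm_to_rem qs)) big_cons /= lerDl.
by apply: sumr_ge0 => x _; exact: sqr_ge0.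
Qed.

(* Case (i): hypothesis (i) gives M <= N d^2, and the largest eigenvalue lies
   beyond 2d, where the bound of energy_split_largest is decreasing. *)
Lemma energy_case_i : N <= 4 * m * (Num.sqrt (1 + D) - 1) / D ->
  QE e s < d + Num.sqrt ((N - 1) * (M - d ^+ 2)).
Proof.
move=> cond; have N_gt0 : 0 < N by have := N_ge2; lra.
have d_ge0 : 0 <= d by apply: divr_ge0; [have := ler0n R (nedges e); lra | lra].
have MN := case_i_threshold N_gt0 D_gt0 cond.
have s_nil : s != [::] by rewrite -size_eq0 (spectrum_size Qspec) -lt0n ltnW // n_gt1.
have [q qs q_max] := seq_max s_nil; have q2d := spectral_radius_gt q_max.
apply: le_lt_trans (energy_split_largest qs _) _; first lra.
by apply: sqrt_tail_decreasing N_ge2 d_ge0 _ MN (eigen_dev_le_moment qs); lra.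
Qed.

(* A spectrum at constant distance c from d makes (Q - d)^2 = c^2 I, so every
   vertex v satisfies (deg v - d)^2 + deg v = c^2. *)
Lemma constant_deviation_degrees (c : R) : (forall q, q \in s -> (q - d) ^+ 2 = c ^+ 2) ->
  forall v, ((deg e v)%:R - d) ^+ 2 + (deg e v)%:R = c ^+ 2.
Proof.
move=> dev_c v; have := congr1 (fun A : 'M[R]_n => A v v) (sq_dev_const Qsym Qspec dev_c).
by rewrite /= signlessQ_shift_sq_diag // mxE eqxx mulr1n.
Qed.

(* Case (ii): Cauchy-Schwarz gives QE^2 <= N M, and equality is impossible:
   it would force all |q - d| to be equal, hence by constant_deviation_degrees
   two distinct solutions deg x0 - d, deg y0 - d of t^2 + t = D / 4. *)
Lemma energy_sq_lt : QE e s ^+ 2 < N * M.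
Proof.
have N_gt0 : 0 < N by have := N_ge2; lra.
set S := \sum_(q <- s) (q - d) ^+ 2.
have SM : S <= M := spectral_second_moment.
have [CS CS_eq] := cauchy_schwarz_seq [seq `|q - d| | q <- s].
rewrite size_map (spectrum_size Qspec) !big_map -/(QE e s) in CS CS_eq.
rewrite (eq_bigr (fun q => (q - d) ^+ 2)) -/S in CS CS_eq; last first.
  by move=> q _; rewrite real_normK ?num_real.
have QE_le : QE e s ^+ 2 <= N * M by apply: le_trans CS _; rewrite ler_wpM2l //; lra.
rewrite lt_neqAle QE_le andbT; apply/eqP => QE_eq.
have SeqM : S = M.
  apply/eqP; rewrite eq_le SM -(ler_pM2l N_gt0) -QE_eq.
  exact: CS.
pose c := QE e s / N.
have dev_c q : q \in s -> (q - d) ^+ 2 = c ^+ 2.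
  have QE_eqS : QE e s ^+ 2 = N * S by rewrite SeqM.
  move=> qs; have := CS_eq QE_eqS _ (map_f _ qs).
  by move=> QE_q; rewrite /c -QE_q [N * _]mulrC mulfK ?N_neq0 // real_normK ?num_real.
have c2 : c ^+ 2 = d + D / 4.
  have Sc : S = N * c ^+ 2.
    by rewrite /S (eq_big_seq _ dev_c) sumr_const_seq (spectrum_size Qspec) mulr_natl.
  by apply: (mulfI N_neq0); rewrite -Sc SeqM; field; exact: N_neq0.
have vertex := constant_deviation_degrees dev_c.
apply: (@no_two_levels _ ((deg e x0)%:R - d) ((deg e y0)%:R - d) D).
- by rewrite (inj_eq (addIr (- d))) eqr_nat.
- by rewrite opprB addrA subrK degree_gap_le.
- by have := vertex x0; lra.
- by have := vertex y0; lra.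
Qed.

End SignlessEnergy.

Theorem mainTheorem14 (R : realType) (n : nat) (e : rel 'I_n) (s : seq R) :
  simple_graph e -> connected_graph e -> ~ regular_graph e ->
  is_spectrum (signlessQ R e) s ->
  let nR : R := n%:R in
  let mR : R := (nedges e)%:R in
  let D : R := ((maxdeg e)%:R - (mindeg e)%:R) ^+ 2 in
  (nR <= 4 * mR * (Num.sqrt (1 + D) - 1) / D ->
     QE e s < 2 * mR / nR
              + Num.sqrt ((nR - 1) * (2 * mR + nR / 4 * D - (2 * mR / nR) ^+ 2)))
  /\
  (4 * mR * (Num.sqrt (1 + D) - 1) / D < nR ->
     QE e s < Num.sqrt (2 * mR / nR + D / 4)
              + Num.sqrt ((nR - 1) * (2 * mR + (nR - 1) / 4 * D - 2 * mR / nR))).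
Proof.
move=> [esym eirr] _ nonreg Qspec /=.
have [x [y deg_xy]] := nonregular_pair nonreg.
split=> [cond_i | _].
  exact: (energy_case_i esym eirr Qspec deg_xy).
have N_ge1 : 1 <= n%:R :> R by have := N_ge2 R deg_xy; lra.
have D_ge0 : 0 <= ((maxdeg e)%:R - (mindeg e)%:R) ^+ 2 :> R := ltW (D_gt0 R deg_xy).
have QE_ge0 : 0 <= QE e s by apply: sumr_ge0 => q _; exact: normr_ge0.
exact: case_ii_bound N_ge1 D_ge0 QE_ge0 (ler0n _ _) (energy_sq_lt esym eirr Qspec deg_xy).
Qed.
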